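(* Let $N\ge 1$, $E=\{0,1,\dots,N\}$, and let $Q$ be the tridiagonal matrix on $E$ described in the context, with $a_i>0$ $(1\le i\le N)$, $b_i>0$ $(0\le i\le N-1)$, $c_i\ge 0$ $(0\le i\le N)$ and $c_N>0$; set $b_N:=c_N$. Fix $z\in\mathbb R$ and $v\in\mathbb R^{N+1}$, and define $\alpha^{(i)}_\ell$, $G^{(i)}_{\ell,k}$, $M_{N-1}$ and $N_n$ as in the context. Suppose $D:=c_N-z+M_{N-1}(c_\cdot-z)\neq 0$, where $c_\cdot-z$ denotes the vector $(c_j-z)_{j\in E}$. Then the equation $Qw+zw=-v$ has a unique solution $w=(w_n)_{n\in E}$, given by $$w_n=\frac{v_N+M_{N-1}(v)}{c_N-z+M_{N-1}(c_\cdot-z)}\bigl[1+N_{n-1}(c_\cdot-z)\bigr]-N_{n-1}(v),\qquad 0\le n\le N.$$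
   Context: The matrix $Q=(q_{ij})_{i,j\in E}$ is tridiagonal with: $q_{00}=-(b_0+c_0)$, $q_{01}=b_0$; for $1\le n\le N-1$: $q_{n,n-1}=a_n$, $q_{nn}=-(a_n+b_n+c_n)$, $q_{n,n+1}=b_n$; $q_{N,N-1}=a_N$, $q_{NN}=-(a_N+c_N)$; all other entries are $0$. Convention: $b_N:=c_N$. For fixed $i$ with $0\le i\le N-1$ and $1\le \ell\le N-i$ define $\alpha^{(i)}_1=(c_{i+1}-z+a_{i+1})/b_{i+1}$ and $\alpha^{(i)}_\ell=(c_{i+\ell}-z)/b_{i+\ell}$ for $2\le\ell\le N-i$. Define $G^{(i)}_{\ell,1}=\alpha^{(i)}_\ell$ for $\ell=1,\dots,N-i$, and recursively for $k=2,\dots,N-i$: $G^{(i)}_{\ell,k}=G^{(i)}_{\ell,k-1}+\alpha^{(i+k-1)}_{\ell-k+1}\,G^{(i)}_{k-1,k-1}$ for $\ell=k,k+1,\dots,N-i$. Set $G^{(j)}_{0,0}=1$ for all $j$. For a vector $h=(h_j)_{j\in E}$ define $M_{N-1}(h)=c_N\sum_{j=0}^{N-1}\frac{h_j}{b_j}G^{(j)}_{N-j,N-j}$, $N_n(h)=\sum_{j=0}^{n}\frac{h_j}{b_j}\sum_{k=0}^{n-j}G^{(j)}_{k,k}$ for $0\le n<N$, and $N_{-1}(h)=0$. *)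

From HB Require Import structures.
From mathcomp Require Import all_boot all_order all_algebra.
Set Implicit Arguments. Unset Strict Implicit. Unset Printing Implicit Defensive.
Import Order.TTheory GRing.Theory Num.Theory.
Local Open Scope ring_scope.

Section Defs.
Variables (R : realFieldType) (N : nat) (a b c : nat -> R) (z : R).

Definition bN (n : nat) : R := if n == N then c N else b n.

Definition Qmat : 'M[R]_(N.+1) :=
  \matrix_(i < N.+1, j < N.+1)
    if ((j : nat).+1 == i) then a i
    else if (j : nat) == i then
      - ((if (i : nat) == 0%N then 0 else a i)
         + (if (i : nat) == N then 0 else b i) + c i)
    else if (j : nat) == i.+1 then b i
    else 0.

Definition alpha (i l : nat) : R :=
  if l == 1%N then (c (i + 1) - z + a (i + 1)) / bN (i + 1)
  else (c (i + l) - z) / bN (i + l).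

(* G^{(i)}_{l,k}; with G_{0,0} = 1 and G_{l,0} = 0 for l >= 1 the recursion
   gives G_{l,1} = alpha^{(i)}_l and
   G_{l,k} = G_{l,k-1} + alpha^{(i+k-1)}_{l-k+1} G_{k-1,k-1}. *)
Fixpoint G (i l k : nat) : R :=
  match k with
  | 0 => if l == 0%N then 1 else 0
  | k'.+1 => G i l k' + alpha (i + k') (l - k') * G i k' k'
  end.

Definition MN1 (h : nat -> R) : R :=
  c N * \sum_(j < N) h j / b j * G j (N - j) (N - j).

(* Nprev h m = N_{m-1}(h); i.e. N_n(h) = Nprev h n.+1 and N_{-1}(h) = Nprev h 0 = 0. *)
Definition Nprev (h : nat -> R) (m : nat) : R :=
  \sum_(j < m) h j / b j * \sum_(k < (m - j)%N) G j k k.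

End Defs.

From HB Require Import structures.
From mathcomp Require Import all_boot all_order all_algebra.
From mathcomp Require Import zify ring.
Import Order.TTheory GRing.Theory Num.Theory.
Local Open Scope ring_scope.

(* Row n of (Q + z) w = -v reads
     b_n (w_{n+1} - w_n) = a_n (w_n - w_{n-1}) + (c_n - z) w_n - v_n   (n < N),
   so, since every b_n is nonzero, rows 0..N-1 determine w from w_0, linearly.
   The functional h |-> N_{n-1}(h) solves these rows with w_0 = 0 and
   right-hand side h (this is what the G-recursion encodes), and the constant
   vector 1 solves them with right-hand side c - z; hence
   w = w_0 (1 + N_{.-1}(c - z)) - N_{.-1}(v).  Row N then evaluates to
   -w_0 D + M_{N-1}(v), so it forces w_0 = (v_N + M_{N-1}(v)) / D. *)

Lemma sum_ord_indicator (R : pzSemiRingType) n m (F : nat -> R) :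
  \sum_(k < n) ((k : nat) == m)%:R * F k = if (m < n)%N then F m else 0.
Proof.
transitivity (\sum_(k < n | (k : nat) == m) F k); last exact: big_ord1_eq.
rewrite [RHS]big_mkcond; apply: eq_bigr => k _.
by case: eqP; rewrite ?mul1r ?mul0r.
Qed.

Lemma sum_ord_indicatorS (R : pzSemiRingType) n m (F : nat -> R) :
  \sum_(k < n) ((k : nat).+1 == m)%:R * F k =
  if (0 < m)%N && (m.-1 < n)%N then F m.-1 else 0.
Proof.
case: m => [|m]; last by rewrite -sum_ord_indicator; apply: eq_bigr => k _.
by rewrite big1 // => k _; rewrite mul0r.
Qed.

Section TridiagonalResolvent.
Variables (R : realFieldType) (N : nat) (a b c : nat -> R) (z : R).

Local Notation G := (G N a b c z).
Local Notation alpha := (alpha N a b c z).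
Local Notation bN := (bN N b c).
Local Notation Nprev := (Nprev N a b c z).
Local Notation MN1 := (MN1 N a b c z).

Lemma G_expand i l k :
  G i l k = (if l == 0%N then 1 else 0) + \sum_(m < k) alpha (i + m) (l - m) * G i m m.
Proof.
elim: k => [|k IH]; first by rewrite big_ord0 addr0.
by rewrite [LHS]/= IH big_ord_recr /= addrA.
Qed.

Lemma G_diag i l : (0 < l)%N ->
  G i l l = ((c (i + l)%N - z) * \sum_(m < l) G i m m
              + a (i + l)%N * G i l.-1 l.-1) / bN (i + l).
Proof.
case: l => // l _; rewrite G_expand /= add0r big_ord_recr /= subSnn.
under eq_bigr => m _.
  have lt_m_l := ltn_ord m.
  rewrite /alpha (_ : (l.+1 - m == 1)%N = false); last by apply/eqP; lia.
  rewrite (_ : (i + m + (l.+1 - m) = i + l.+1)%N); last by lia.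
  over.
rewrite /alpha eqxx addn1 -addnS big_ord_recr /= -mulr_sumr.
ring.
Qed.

Definition Ndiff (h : nat -> R) (n : nat) : R :=
  \sum_(j < n.+1) h j / b j * G j (n - j) (n - j).

Lemma Nprev0 h : Nprev h 0 = 0.
Proof. by rewrite /Nprev big_ord0. Qed.

Lemma NprevS h n : Nprev h n.+1 = Nprev h n + Ndiff h n.
Proof.
rewrite /Nprev /Ndiff big_ord_recr /= subSnn big_ord1 /=.
rewrite [in RHS]big_ord_recr /= subnn addrA; congr (_ + _).
rewrite -big_split; apply: eq_bigr => j _.
by rewrite subSn ?(ltnW (ltn_ord j)) // big_ord_recr /= mulrDr.
Qed.

Lemma Ndiff0 h : Ndiff h 0 = h 0%N / b 0%N.
Proof. by rewrite /Ndiff big_ord1 mulr1. Qed.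

Lemma Ndiff_head h n :
  Ndiff h n = \sum_(j < n) h j / b j * G j (n - j) (n - j) + h n / b n.
Proof. by rewrite /Ndiff big_ord_recr /= subnn mulr1. Qed.

Lemma NdiffS h n :
  Ndiff h n.+1 = ((c n.+1 - z) * Nprev h n.+1 + a n.+1 * Ndiff h n) / bN n.+1
                 + h n.+1 / b n.+1.
Proof.
rewrite Ndiff_head; congr (_ + _).
rewrite /Nprev /Ndiff !mulr_sumr -big_split mulr_suml; apply: eq_bigr => j _.
have lt_j_n := ltn_ord j.
rewrite G_diag ?subn_gt0 // (_ : (j + (n.+1 - j) = n.+1)%N); last by lia.
rewrite (_ : ((n.+1 - j).-1 = n - j)%N) /=; last by lia.
ring.
Qed.

Lemma MN1_Ndiff h : (0 < N)%N -> c N != 0 ->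
  MN1 h = (c N - z) * Nprev h N + a N * Ndiff h N.-1.
Proof.
move=> N_gt0 cN_neq0.
have := NdiffS h N.-1; rewrite prednK // Ndiff_head => /addIr sum_eq.
by rewrite /MN1 sum_eq /bN eqxx mulrC divfK.
Qed.

Definition Qz_row (w : nat -> R) (i : nat) : R :=
  (if i == 0%N then 0 else a i * w i.-1)
  - ((if i == 0%N then 0 else a i) + (if i == N then 0 else b i) + c i) * w i
  + (if i == N then 0 else b i * w i.+1) + z * w i.

Lemma Qz_row_mx (w : 'cV[R]_N.+1) (i : 'I_N.+1) :
  (Qmat N a b c *m w + z *: w) i 0 = Qz_row (fun j => w (inord j) 0) i.
Proof.
set wf := fun j : nat => w (inord j) 0.
set d := - ((if (i : nat) == 0%N then 0 else a i)
            + (if (i : nat) == N then 0 else b i) + c i).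
rewrite !mxE (eq_bigr (fun j : 'I_N.+1 => ((j : nat).+1 == i)%:R * (a i * wf j)
   + ((j : nat) == i)%:R * (d * wf j) + ((j : nat) == i.+1)%:R * (b i * wf j))).
  rewrite !big_split /= (@sum_ord_indicatorS _ _ _ (fun k => a i * wf k)).
  rewrite (@sum_ord_indicator _ _ _ (fun k => d * wf k)).
  rewrite (@sum_ord_indicator _ _ _ (fun k => b i * wf k)) /Qz_row /d.
  have -> : w i 0 = wf i by rewrite /wf inord_val.
  rewrite ltn_ord (leq_ltn_trans (leq_pred i) (ltn_ord i)) andbT lt0n ltnS.
  rewrite ltn_neqAle -ltnS ltn_ord andbT.
  by case: (_ == 0%N); case: (_ == N) => /=; ring.
move=> j _; rewrite mxE /wf inord_val -/d.
case: ((j : nat).+1 =P i) => [Sj_eq_i|]; case: ((j : nat) =P i) => [j_eq_i|];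
  case: ((j : nat) =P i.+1) => [j_eq_Si|];
  rewrite /= ?mul1r ?mul0r ?addr0 ?add0r //; lia.
Qed.

Lemma eq_Qz_row {f g : nat -> R} {i : nat} :
  (forall m, (m <= N)%N -> f m = g m) -> (i <= N)%N -> Qz_row f i = Qz_row g i.
Proof.
move=> fg le_i_N; rewrite /Qz_row (fg i) // (fg i.-1) ?(leq_trans (leq_pred i)) //.
by have [//|ne_i_N] := eqVneq i N; rewrite (fg i.+1) // ltn_neqAle ne_i_N.
Qed.

Lemma Qz_row_forward_unique {f g : nat -> R} :
  (forall i, (i < N)%N -> b i != 0) ->
  (forall i, (i < N)%N -> Qz_row f i = Qz_row g i) ->
  f 0%N = g 0%N -> forall n, (n <= N)%N -> f n = g n.
Proof.
move=> b_neq0 rows_eq f0_eq.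
suff agree_upto : forall n, (n <= N)%N -> forall m, (m <= n)%N -> f m = g m.
  by move=> n le_n_N; apply: agree_upto le_n_N _ (leqnn n).
elim=> [_ m|n IH lt_n_N m]; first by rewrite leqn0 => /eqP ->.
have {}IH := IH (ltnW lt_n_N).
rewrite leq_eqVlt ltnS => /predU1P [->|]; last exact: IH.
have := rows_eq n lt_n_N.
rewrite /Qz_row (ltn_eqF lt_n_N) (IH n) // (IH n.-1) ?leq_pred //.
by move/addIr/addrI/(mulfI (b_neq0 n lt_n_N)).
Qed.

Lemma Qz_row_Nprev h i : (i < N)%N -> b i != 0 -> Qz_row (Nprev h) i = h i.
Proof.
move=> lt_i_N bi_neq0; rewrite /Qz_row (ltn_eqF lt_i_N).
case: i lt_i_N bi_neq0 => [|i] lt_i_N bi_neq0 /=.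
  by rewrite NprevS Nprev0 Ndiff0; field.
rewrite (NprevS h i.+1) NdiffS (NprevS h i) /bN (ltn_eqF lt_i_N).
by field.
Qed.

Lemma Qz_row_Nprev_last h :
  (0 < N)%N -> c N != 0 -> Qz_row (Nprev h) N = - MN1 h.
Proof.
move=> N_gt0 cN_neq0; rewrite MN1_Ndiff // /Qz_row eqxx (gtn_eqF N_gt0).
have := NprevS h N.-1; rewrite prednK // => ->.
ring.
Qed.

Lemma Qz_row_const1 i : Qz_row (fun=> 1) i = z - c i.
Proof. by rewrite /Qz_row; case: (i == 0%N); case: (i == N); ring. Qed.

Definition forward_solution (h : nat -> R) (x : R) (n : nat) : R :=
  x * (1 + Nprev (fun j => c j - z) n) - Nprev h n.

Lemma forward_solution0 h x : forward_solution h x 0 = x.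
Proof. by rewrite /forward_solution !Nprev0 addr0 mulr1 subr0. Qed.

Lemma Qz_row_forward_solution_split h x i :
  Qz_row (forward_solution h x) i =
  x * (Qz_row (fun=> 1) i + Qz_row (Nprev (fun j => c j - z)) i)
  - Qz_row (Nprev h) i.
Proof.
by rewrite /Qz_row /forward_solution; case: (i == 0%N); case: (i == N); ring.
Qed.

Lemma Qz_mx_eq_iff_rows (v w : 'cV[R]_N.+1) :
  Qmat N a b c *m w + z *: w = - v <->
  forall i, (i <= N)%N -> Qz_row (fun j => w (inord j) 0) i = - v (inord i) 0.
Proof.
split=> [sol i le_i_N | rows].
  by rewrite -[i in Qz_row _ i](@inordK N) // -Qz_row_mx sol mxE.
by apply/matrixP => i j; rewrite ord1 Qz_row_mx rows ?leq_ord // mxE inord_val.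
Qed.

Section Solution.
Hypotheses (N_gt0 : (0 < N)%N) (b_neq0 : forall i, (i < N)%N -> b i != 0)
  (cN_neq0 : c N != 0).

Lemma Qz_row_forward_solution h x i :
  (i < N)%N -> Qz_row (forward_solution h x) i = - h i.
Proof.
move=> lt_i_N; have bi_neq0 := b_neq0 _ lt_i_N.
rewrite Qz_row_forward_solution_split Qz_row_const1 !Qz_row_Nprev //.
ring.
Qed.

Lemma Qz_row_forward_solution_last h x :
  Qz_row (forward_solution h x) N
  = MN1 h - x * (c N - z + MN1 (fun j => c j - z)).
Proof.
rewrite Qz_row_forward_solution_split Qz_row_const1 !Qz_row_Nprev_last //.
ring.
Qed.

Lemma Qz_rows_iff_forward_solution (h w : nat -> R) :
  let D := c N - z + MN1 (fun j => c j - z) in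
  D != 0 ->
  (forall i, (i <= N)%N -> Qz_row w i = - h i) <->
  (forall n, (n <= N)%N -> w n = forward_solution h ((h N + MN1 h) / D) n).
Proof.
move=> D D_neq0.
have last_row x :
    Qz_row (forward_solution h x) N = - h N <-> x = (h N + MN1 h) / D.
  rewrite Qz_row_forward_solution_last; split=> [row_N|->]; last first.
    by rewrite divfK //; ring.
  apply: (mulIf D_neq0); rewrite divfK // -[h N]opprK -row_N.
  by rewrite /D; ring.
split=> [rows n le_n_N|sol i le_i_N].
  have rows_lt i :
      (i < N)%N -> Qz_row w i = Qz_row (forward_solution h (w 0%N)) i.
    by move=> lt_i_N; rewrite rows ?(ltnW lt_i_N) // Qz_row_forward_solution.
  have agree := Qz_row_forward_unique b_neq0 rows_lt
    (esym (forward_solution0 h (w 0%N))).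
  have /last_row <- : Qz_row (forward_solution h (w 0%N)) N = - h N.
    by rewrite -(eq_Qz_row agree) ?rows.
  exact: agree.
rewrite (eq_Qz_row sol) //.
move: le_i_N; rewrite leq_eqVlt => /predU1P [->|lt_i_N]; first exact/last_row.
exact: Qz_row_forward_solution.
Qed.

Lemma Qz_mx_solution_iff (v w : 'cV[R]_N.+1) :
  let vf := fun j => v (inord j) 0 in
  let D := c N - z + MN1 (fun j => c j - z) in
  D != 0 ->
  Qmat N a b c *m w + z *: w = - v <->
  w = \col_(n < N.+1) forward_solution vf ((vf N + MN1 vf) / D) n.
Proof.
move=> vf D D_neq0.
rewrite Qz_mx_eq_iff_rows (Qz_rows_iff_forward_solution vf) //.
split=> [agree | -> n le_n_N]; last by rewrite mxE inordK.
by apply/matrixP => i j; rewrite ord1 mxE -agree ?leq_ord // inord_val.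
Qed.

End Solution.

End TridiagonalResolvent.

Theorem mainTheorem1 (R : realFieldType) (N : nat) (a b c : nat -> R)
  (z : R) (v : 'cV[R]_(N.+1)) :
  (1 <= N)%N ->
  (forall i, (1 <= i <= N)%N -> 0 < a i) ->
  (forall i, (i <= N.-1)%N -> 0 < b i) ->
  (forall i, (i <= N)%N -> 0 <= c i) ->
  0 < c N ->
  let vf := fun j : nat => v (inord j) 0 in
  let cz := fun j : nat => c j - z in
  let D := c N - z + MN1 N a b c z cz in
  D != 0 ->
  (exists! w : 'cV[R]_(N.+1), Qmat N a b c *m w + z *: w = - v) /\
  (forall w : 'cV[R]_(N.+1), Qmat N a b c *m w + z *: w = - v ->
     forall n : 'I_(N.+1),
       w n 0 = (vf N + MN1 N a b c z vf) / D * (1 + Nprev N a b c z cz n)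
               - Nprev N a b c z vf n).
Proof.
move=> N_gt0 _ b_pos _ cN_pos vf cz D D_neq0.
have b_neq0 i : (i < N)%N -> b i != 0.
  by move=> lt_i_N; rewrite lt0r_neq0 // b_pos // -ltnS prednK.
have solP w :=
  Qz_mx_solution_iff R N a b c z N_gt0 b_neq0 (lt0r_neq0 cN_pos) v w D_neq0.
split; last by move=> w /solP -> n; rewrite mxE.
exists (\col_(n < N.+1)
  forward_solution R N a b c z vf ((vf N + MN1 N a b c z vf) / D) n).
by split=> [|w /solP ->]; first exact/solP.
Qed.
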